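(* Let $\mathcal{X},\mathcal{Y}$ be finite sets, $P_X$ a probability distribution on $\mathcal{X}$, $d:\mathcal{X}\times\mathcal{Y}\to[0,\infty)$ a distortion function with $d(x,y)\le d_{max}$ for all $x,y$, and $Q_Y$ a probability distribution on $\mathcal{Y}$. Let $R\ge 0$ be such that $e^R$ is an integer, $M=e^R+1$, $X\sim P_X$, and $Y_0,\dots,Y_{M-1}$ i.i.d. $\sim Q_Y$ independent of $X$. Then for every $\lambda<R$, $$\mathbb{E}\Big[\min_i d(X,Y_i)\Big]\le \tilde D\big(e^{-(R-\lambda)},Q_Y\big)+\Big(\tilde D(1,Q_Y)-\tilde D\big(e^{-(R-\lambda)},Q_Y\big)\Big)e^{-e^{\lambda}}(e^{\lambda}+1)\le \tilde D\big(e^{-(R-\lambda)},Q_Y\big)+d_{max}\, e^{-e^{\lambda}}(e^{\lambda}+1).$$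
   Context: For $x\in\mathcal{X}$, $y\in\mathcal{Y}$, $u\in[0,1]$ let $p_{c,x,y,u}=Q_Y\{y': d(x,y')<d(x,y)\}+u\cdot Q_Y\{y': d(x,y')=d(x,y)\}$. For $w\in(0,1]$ define $\tilde D(w,Q_Y)=w^{-1}\,\mathbb{E}[d(X,Y)\mathbf{1}\{p_{c,X,Y,U}\le w\}]$, where $X\sim P_X$, $Y\sim Q_Y$, $U$ uniform on $[0,1]$ are independent. *)

From HB Require Import structures.
From mathcomp Require Import all_boot all_order all_algebra.
From mathcomp Require Import all_classical all_reals all_analysis.
Set Implicit Arguments. Unset Strict Implicit. Unset Printing Implicit Defensive.
Import Order.TTheory GRing.Theory Num.Theory.
Local Open Scope classical_set_scope.
Local Open Scope ring_scope.

Definition is_pmf (R : realType) (T : finType) (P : T -> R) : Prop :=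
  (forall t, 0 <= P t) /\ \sum_(t : T) P t = 1.

Definition pc (R : realType) (X Y : finType) (QY : Y -> R) (d : X -> Y -> R)
  (x : X) (y : Y) (u : R) : R :=
  \sum_(y' : Y | d x y' < d x y) QY y' + u * \sum_(y' : Y | d x y' == d x y) QY y'.

(* Dtilde(w, Q_Y) = w^-1 E[d(X,Y) 1{p_{c,X,Y,U} <= w}],
   X ~ P_X, Y ~ Q_Y, U ~ Unif[0,1] independent. The expectation over the
   finite variables is a finite sum, the one over U a Lebesgue integral on [0,1]. *)
Definition Dtilde (R : realType) (X Y : finType) (PX : X -> R) (QY : Y -> R)
  (d : X -> Y -> R) (w : R) : R :=
  w^-1 * \sum_(x : X) \sum_(y : Y) PX x * QY y *
    Rintegral (@lebesgue_measure R) `[0%R, 1%R]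
      (fun u : R => d x y * (if pc QY d x y u <= w then 1 else 0)).

(* E[min_i d(X, Y_i)] with X ~ P_X, Y_0..Y_{M-1} iid ~ Q_Y independent of X,
   here M = m.+1. *)
Definition Emin (R : realType) (X Y : finType) (PX : X -> R) (QY : Y -> R)
  (d : X -> Y -> R) (m : nat) : R :=
  \sum_(x : X) \sum_(ys : {ffun 'I_m.+1 -> Y})
    PX x * (\prod_(i < m.+1) QY (ys i)) *
    \big[Num.min/d x (ys ord0)]_(i < m.+1) d x (ys i).

From HB Require Import structures.
From mathcomp Require Import all_boot all_order all_algebra.
From mathcomp Require Import all_classical all_reals all_analysis.
From mathcomp Require Import ring lra.
Import Order.TTheory GRing.Theory Num.Theory.
Set Implicit Arguments. Unset Strict Implicit. Unset Printing Implicit Defensive.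
Local Open Scope classical_set_scope.
Local Open Scope ring_scope.

(* Fix x and let u_1 < ... < u_k be the values of d x, with a_j = Q_Y{d x < u_j}
   and b_j = Q_Y{d x = u_j}.  Both sides are Stieltjes sums
   S F = sum_j u_j (F a_j - F (a_j + b_j)): the minimum of M i.i.d. draws gives
   F a = (1 - a)^M, and averaging the integral over U in D~(w) gives
   F a = (w - a)_+.  The right-hand side is then S G for a piecewise linear G
   with G a >= (1 - a)^M on [0, 1] (on [0, w] by convexity of t^M, on [w, 1]
   because (1 - w)^(M-1) <= exp (-(M-1) w) = exp (-e^lambda)), and G 1 = 0, so
   summation by parts against the increasing u_j gives the first inequality.
   The second one holds because 0 <= D~(w) and D~(1) <= d_max. *)

Lemma sum_by_fibres (R : pzSemiRingType) (T : finType) (V : eqType)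
    (om : T -> R) (f : T -> V) (h : V -> R) (t : seq V) :
  uniq t -> (forall x, f x \in t) ->
  \sum_x om x * h (f x) = \sum_(v <- t) (\sum_(x | f x == v) om x) * h v.
Proof.
move=> t_uniq ft.
under [RHS]eq_bigr do rewrite mulr_suml big_mkcond.
rewrite exchange_big /=; apply: eq_bigr => x _.
rewrite -big_mkcond /= -big_filter.
rewrite (eq_filter (a2 := pred1 (f x))); last by move=> v /=; rewrite eq_sym.
by rewrite filter_pred1_uniq // big_seq1.
Qed.

Lemma sum_ffun_prod_pred (R : comPzSemiRingType) (Y : finType) (q : Y -> R)
    (k : nat) (P : pred Y) :
  \sum_(ys : {ffun 'I_k -> Y} | [forall i, P (ys i)]) \prod_(i < k) q (ys i)
  = (\sum_(y | P y) q y) ^+ k.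
Proof.
have -> : (\sum_(y | P y) q y) ^+ k = \prod_(i < k) \sum_y (if P y then q y else 0).
  by rewrite prodr_const card_ord big_mkcond.
rewrite bigA_distr_bigA big_mkcond /=; apply: eq_bigr => ys _.
case: forallP => [allP | /forallP]; first by apply: eq_bigr => i _; rewrite allP.
rewrite negb_forall => /existsP[i /negbTE Pi].
by rewrite (bigD1 i) //= Pi mul0r.
Qed.

Lemma abel_sum_ge (R : realDomainType) (K b : R -> R) (t : seq R) (a0 m : R) :
  sorted <%R t -> {in t, forall u, 0 <= b u} -> 0 <= a0 ->
  a0 + \sum_(u <- t) b u = 1 ->
  (forall a, 0 <= a <= 1 -> 0 <= K a) -> K 1 = 0 ->
  {in t, forall u, m <= u} ->
  m * K a0 <= \sum_(u <- t) u * (K (a0 + \sum_(v <- t | v < u) b v)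
                                 - K (a0 + \sum_(v <- t | v < u) b v + b u)).
Proof.
move=> + + + + K_ge0 K1.
elim: t a0 m => [|u0 t IH] a0 m /= t_sorted b_ge0 a0_ge0 sum1 m_le.
  by move: sum1; rewrite big_nil addr0 => ->; rewrite K1 mulr0 big_nil.
move: t_sorted; rewrite (path_sortedE lt_trans) => /andP[/allP u0_lt t_sorted].
have b_ge0_t : {in t, forall u, 0 <= b u}.
  by move=> u ut; apply: b_ge0; rewrite inE ut orbT.
have bu0_ge0 : 0 <= b u0 by apply: b_ge0; rewrite mem_head.
have sum_t_ge0 : 0 <= \sum_(u <- t) b u by rewrite big_seq sumr_ge0.
move: sum1; rewrite big_cons addrA => sum1.
have Ka0_ge0 : 0 <= K a0.
  by apply: K_ge0; rewrite a0_ge0 -sum1 -addrA lerDl addr_ge0.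
have below_u0 : \sum_(v <- u0 :: t | v < u0) b v = 0.
  rewrite big_cons ltxx big_seq_cond big_pred0 // => v; apply/negbTE.
  by rewrite negb_and; case: (boolP (v \in t)) => //= vt; rewrite -leNgt ltW ?u0_lt.
have below_t u : u \in t ->
    a0 + \sum_(v <- u0 :: t | v < u) b v = a0 + b u0 + \sum_(v <- t | v < u) b v.
  by move=> ut; rewrite big_cons u0_lt // addrA.
rewrite big_cons below_u0 addr0 big_seq.
under eq_bigr => u ut do rewrite below_t //.
rewrite -big_seq.
have IHt := IH _ u0 t_sorted b_ge0_t (addr_ge0 a0_ge0 bu0_ge0) sum1
  (fun u ut => ltW (u0_lt u ut)).
apply: (le_trans (y := u0 * K a0)).
  by rewrite ler_wpM2r // m_le ?mem_head.
by rewrite -{1}(subrK (K (a0 + b u0)) (K a0)) mulrDr lerD2l.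
Qed.

Lemma exprn_convex_le (R : realDomainType) (t x : R) (N : nat) :
  0 <= t <= 1 -> 0 <= x <= 1 -> ((1 - t) + t * x) ^+ N <= (1 - t) + t * x ^+ N.
Proof.
move=> /andP[t_ge0 t_le1] /andP[x_ge0 x_le1].
elim: N => [|N IH]; first by rewrite !expr0; lra.
have xN_ge0 : 0 <= x ^+ N by rewrite exprn_ge0.
have xN_le1 : x ^+ N <= 1 by rewrite exprn_ile1.
have comb_ge0 : 0 <= (1 - t) + t * x by nra.
rewrite exprS [x ^+ N.+1]exprS.
apply: le_trans (ler_wpM2l comb_ge0 IH) _.
have gap : (1 - t) + t * (x * x ^+ N) - ((1 - t) + t * x) * ((1 - t) + t * x ^+ N)
         = t * (1 - t) * (1 - x) * (1 - x ^+ N) by ring.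
have : 0 <= t * (1 - t) * (1 - x) * (1 - x ^+ N) by rewrite !mulr_ge0 // subr_ge0.
lra.
Qed.

Definition ramp (R : realDomainType) (c a : R) : R := Num.max 0 (c - a).

Lemma ramp_increment_bounds (R : realDomainType) (c a b : R) : 0 <= b ->
  0 <= ramp c a - ramp c (a + b) <= b.
Proof.
by move=> b_ge0; rewrite /ramp; case: (leP 0 (c - a)); case: (leP 0 (c - (a + b))); lra.
Qed.

Lemma ramp_increment_clamp (R : realFieldType) (a b w : R) : 0 < b ->
  b * Num.max 0 (Num.min 1 ((w - a) / b)) = ramp w a - ramp w (a + b).
Proof.
move=> b_gt0; set r := (w - a) / b.
have wa : w - a = r * b by rewrite /r divfK // gt_eqF.
have wab : w - (a + b) = (r - 1) * b by rewrite opprD addrA wa mulrBl mul1r.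
rewrite /ramp wab wa; have [r_le0|r_gt0] := leP r 0.
  have rb : r * b <= 0 by nra.
  have r1b : (r - 1) * b <= 0 by nra.
  rewrite (min_r (le_trans r_le0 ler01)) (max_l r_le0).
  by rewrite (max_l rb) (max_l r1b) subrr mulr0.
have rb : 0 <= r * b by nra.
have [r_le1|r_gt1] := leP r 1.
  have r1b : (r - 1) * b <= 0 by nra.
  by rewrite (max_r (ltW r_gt0)) (max_r rb) (max_l r1b) subr0 mulrC.
have r1b : 0 <= (r - 1) * b by nra.
by rewrite (max_r ler01) (max_r rb) (max_r r1b); ring.
Qed.

Lemma one_sub_exprS_le (R : realFieldType) (w a P : R) (n : nat) :
  0 < w < 1 -> 0 <= a <= 1 -> (1 - w) ^+ n <= P ->
  (1 - a) ^+ n.+1 <= ramp w a / w + (ramp 1 a - ramp w a / w) * P.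
Proof.
move=> /andP[w_gt0 w_lt1] /andP[a_ge0 a_le1] hP.
rewrite /ramp (max_r (_ : 0 <= 1 - a)) ?subr_ge0 //.
have [a_le_w|w_lt_a] := leP a w; last first.
  rewrite (max_l (_ : w - a <= 0)) ?subr_le0 ?(ltW w_lt_a) // mul0r add0r subr0 exprS.
  apply: ler_wpM2l; first by rewrite subr_ge0.
  apply: le_trans hP; apply: lerXn2r; rewrite ?nnegrE ?subr_ge0 //.
  - exact: ltW.
  - by rewrite lerD2l lerN2 ltW.
set t := a / w.
have a_eq : a = t * w by rewrite /t divfK // gt_eqF.
have t01 : 0 <= t <= 1 by rewrite /t divr_ge0 ?(ltW w_gt0) //= ler_pdivrMr // mul1r.
have w01 : 0 <= 1 - w <= 1 by rewrite subr_ge0 (ltW w_lt1) gerBl (ltW w_gt0).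
rewrite (max_r (_ : 0 <= w - a)) ?subr_ge0 //.
have -> : (w - a) / w = 1 - t by rewrite a_eq -{1}[w]mul1r -mulrBl mulfK // gt_eqF.
have -> : 1 - a = (1 - t) + t * (1 - w) by rewrite a_eq; ring.
apply: le_trans (exprn_convex_le n.+1 t01 w01) _.
have : t * (1 - w) * (1 - w) ^+ n <= t * (1 - w) * P.
  by rewrite ler_wpM2l // mulr_ge0 //; case/andP: t01; case/andP: w01.
rewrite exprS; nra.
Qed.

Lemma exprn_one_sub_le_expR (R : realType) (w : R) (n : nat) :
  w <= 1 -> (1 - w) ^+ n <= expR (- (n%:R * w)).
Proof.
move=> w_le1; rewrite -mulrN expRM_natl lerXn2r ?nnegrE ?expR_ge0 ?subr_ge0 //.
by have := expR_ge1Dx (- w); lra.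
Qed.

Section StieltjesSum.
Variables (R : realDomainType) (Y : finType) (q D : Y -> R).

Definition mass_below (v : R) : R := \sum_(y | D y < v) q y.
Definition mass_at (v : R) : R := \sum_(y | D y == v) q y.
Definition value_seq : seq R := sort <=%O (undup [seq D y | y <- enum Y]).

Definition stieltjes_sum (F : R -> R) : R :=
  \sum_(u <- value_seq) u * (F (mass_below u) - F (mass_below u + mass_at u)).

Lemma value_seq_uniq : uniq value_seq.
Proof. by rewrite sort_uniq undup_uniq. Qed.

Lemma value_seq_sorted : sorted <%R value_seq.
Proof. by rewrite sort_lt_sorted undup_uniq. Qed.

Lemma mem_value_seq y : D y \in value_seq.
Proof. by rewrite mem_sort mem_undup map_f ?mem_enum. Qed.

Lemma value_seqP u : u \in value_seq -> exists y, u = D y.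
Proof. by rewrite mem_sort mem_undup => /mapP[y _ ->]; exists y. Qed.

Lemma sum_by_value (h : R -> R) :
  \sum_y q y * h (D y) = \sum_(u <- value_seq) mass_at u * h u.
Proof. exact: sum_by_fibres value_seq_uniq mem_value_seq. Qed.

Lemma mass_below_value_seq v :
  mass_below v = \sum_(u <- value_seq | u < v) mass_at u.
Proof.
pose below u : R := if u < v then 1 else 0.
transitivity (\sum_y q y * below (D y)).
  rewrite /mass_below big_mkcond; apply: eq_bigr => y _.
  by rewrite /below; case: ifP; rewrite ?mulr1 ?mulr0.
rewrite sum_by_value [RHS]big_mkcond; apply: eq_bigr => u _.
by rewrite /below; case: ifP; rewrite ?mulr1 ?mulr0.
Qed.

Lemma stieltjes_sum_lin (a b : R) (F G : R -> R) :
  stieltjes_sum (fun t => a * F t + b * G t) = a * stieltjes_sum F + b * stieltjes_sum G.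
Proof.
by rewrite /stieltjes_sum !mulr_sumr -big_split; apply: eq_bigr => u _ /=; ring.
Qed.

Hypothesis q_ge0 : forall y, 0 <= q y.

Lemma mass_at_ge0 u : 0 <= mass_at u.
Proof. exact: sumr_ge0. Qed.

Hypothesis D_ge0 : forall y, 0 <= D y.

Lemma value_seq_ge0 u : u \in value_seq -> 0 <= u.
Proof. by case/value_seqP => y ->. Qed.

Lemma stieltjes_sum_ramp_ge0 c : 0 <= stieltjes_sum (ramp c).
Proof.
rewrite /stieltjes_sum big_seq sumr_ge0 // => u ut.
apply: mulr_ge0; first exact: value_seq_ge0.
by case/andP: (ramp_increment_bounds c (mass_below u) (mass_at_ge0 u)).
Qed.

Hypothesis q_sum1 : \sum_y q y = 1.

Lemma sum_mass_at : \sum_(u <- value_seq) mass_at u = 1.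
Proof.
transitivity (\sum_(u <- value_seq) mass_at u * 1).
  by under [RHS]eq_bigr do rewrite mulr1.
by rewrite -(sum_by_value (fun=> 1)) /=; under eq_bigr do rewrite mulr1.
Qed.

Lemma mass_ge u : \sum_(y | u <= D y) q y = 1 - mass_below u.
Proof.
rewrite -q_sum1 /mass_below [in RHS](bigID (fun y => D y < u)) /= addrC addrK.
by apply: eq_bigl => y; rewrite leNgt.
Qed.

Lemma mass_gt u : \sum_(y | u < D y) q y = 1 - (mass_below u + mass_at u).
Proof.
have -> : 1 = mass_below u + mass_at u + \sum_(y | u < D y) q y.
  rewrite -q_sum1 /mass_below /mass_at (big_mkcond (fun y => D y < u)).
  rewrite (big_mkcond (fun y => D y == u)) (big_mkcond (fun y => u < D y)) -!big_split.
  by apply: eq_bigr => y _ /=; case: ltgtP; rewrite ?add0r ?addr0.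
by rewrite addrC addKr.
Qed.

Lemma stieltjes_sum_ramp_le c M :
  (forall y, D y <= M) -> stieltjes_sum (ramp c) <= M.
Proof.
move=> D_le; rewrite -[M]mulr1 -sum_mass_at mulr_sumr /stieltjes_sum.
rewrite big_seq [X in _ <= X]big_seq; apply: ler_sum => u ut.
have [y ->] := value_seqP ut.
have /andP[_ inc_le] := ramp_increment_bounds c (mass_below (D y)) (mass_at_ge0 (D y)).
exact: le_trans (ler_wpM2l (D_ge0 y) inc_le) (ler_wpM2r (mass_at_ge0 _) (D_le y)).
Qed.

Lemma stieltjes_sum_ge0 (K : R -> R) :
  (forall a, 0 <= a <= 1 -> 0 <= K a) -> K 1 = 0 -> 0 <= stieltjes_sum K.
Proof.
move=> K_ge0 K1.
have sum1 : 0 + \sum_(u <- value_seq) mass_at u = 1 by rewrite add0r sum_mass_at.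
have := abel_sum_ge value_seq_sorted (fun u _ => mass_at_ge0 u) (lexx 0) sum1 K_ge0 K1
  value_seq_ge0.
by rewrite mul0r; under eq_bigr do rewrite !add0r -mass_below_value_seq.
Qed.

Lemma expected_min_stieltjes k :
  \sum_(ys : {ffun 'I_k.+1 -> Y})
     (\prod_(i < k.+1) q (ys i)) * \big[Num.min/D (ys ord0)]_(i < k.+1) D (ys i)
  = stieltjes_sum (fun a => (1 - a) ^+ k.+1).
Proof.
pose mn (ys : {ffun 'I_k.+1 -> Y}) := \big[Num.min/D (ys ord0)]_(i < k.+1) D (ys i).
have mn_value ys : mn ys \in value_seq.
  rewrite /mn; elim/big_ind: _ => [|a b ? ?|i _]; rewrite ?mem_value_seq //.
  by rewrite minEle; case: ifP.
rewrite (sum_by_fibres (fun ys : {ffun 'I_k.+1 -> Y} => \prod_(i < k.+1) q (ys i)) id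
  value_seq_uniq mn_value).
apply: eq_bigr => u _; rewrite mulrC; congr (_ * _).
have ge ys : (u <= mn ys) = [forall i, u <= D (ys i)].
  by apply/bigmin_geP/forallP => [[_ h] i|h]; [exact: h | split=> // i _; exact: h].
have gt ys : (u < mn ys) = [forall i, u < D (ys i)].
  by apply/bigmin_gtP/forallP => [[_ h] i|h]; [exact: h | split=> // i _; exact: h].
rewrite -mass_ge -mass_gt -!sum_ffun_prod_pred.
rewrite (big_mkcond (fun ys : {ffun _ -> _} => [forall i, u <= D (ys i)])).
rewrite (big_mkcond (fun ys : {ffun _ -> _} => [forall i, u < D (ys i)])).
rewrite [LHS]big_mkcond -sumrB; apply: eq_bigr => ys _ /=.
by rewrite -ge -gt; case: (ltgtP u (mn ys)); rewrite ?subrr ?subr0.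
Qed.

End StieltjesSum.

Lemma Rintegral_affine_indicator (R : realType) (c a b w : R) : 0 < b ->
  Rintegral (@lebesgue_measure R) `[0%R, 1%R]
    (fun u => c * (if a + u * b <= w then 1 else 0))
  = c * Num.max 0 (Num.min 1 ((w - a) / b)).
Proof.
move=> b_gt0; set S := [set u : R | a + u * b <= w]; set m := Num.min 1 _.
have sublevel : `[0%R, 1%R] `&` S = [set` `[0%R, m]].
  apply/seteqP; split => u /=; rewrite !in_itv /= le_min ler_pdivlMr // lerBrDl.
    by move=> [/andP[-> ->]].
  by move=> /andP[-> /andP[-> ?]].
transitivity (Rintegral (@lebesgue_measure R) (`[0%R, 1%R] `&` S) (cst c)).
  rewrite Rintegral_mkcondr; apply: eq_Rintegral => u _.
  rewrite patchE; case: (boolP (u \in S)) => [/set_mem uS|uNS].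
    by rewrite /S /= in uS; rewrite uS mulr1.
  have : ~ S u by move=> uS; move/negP: uNS; apply; exact: mem_set.
  by rewrite /S /=; case: ifPn => // _ _; rewrite mulr0.
rewrite sublevel Rintegral_cst ?measurable_itv //; congr (_ * _).
have itv_length : fine (lebesgue_measure (`[0, m]%classic : set R)) = Num.max 0 m.
  rewrite lebesgue_measure_itv /= lte_fin; case: ifPn => [m_gt0|].
    by rewrite /= oppr0 addr0 (max_idPr (ltW m_gt0)).
  by rewrite -leNgt => /max_idPl ->.
exact: itv_length.
Qed.

(* b times the length of {u in [0, 1] | a + u b <= w} is the length of the part
   of [a, a + b] below w. *)
Lemma Rintegral_threshold (R : realType) (c a b w : R) : 0 <= b ->
  b * Rintegral (@lebesgue_measure R) `[0%R, 1%R]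
        (fun u => c * (if a + u * b <= w then 1 else 0))
  = c * (ramp w a - ramp w (a + b)).
Proof.
rewrite le_eqVlt => /predU1P[<-|b_gt0]; first by rewrite mul0r addr0 subrr mulr0.
by rewrite Rintegral_affine_indicator // mulrCA ramp_increment_clamp.
Qed.

Lemma sum_Rintegral_threshold (R : realType) (Y : finType) (q D : Y -> R) (w : R) :
  (forall y, 0 <= q y) ->
  \sum_y q y * Rintegral (@lebesgue_measure R) `[0%R, 1%R]
      (fun u => D y * (if mass_below q D (D y) + u * mass_at q D (D y) <= w
                       then 1 else 0))
  = stieltjes_sum q D (ramp w).
Proof.
move=> q_ge0; rewrite (sum_by_value q D (fun v =>
  Rintegral (@lebesgue_measure R) `[0%R, 1%R]
    (fun u => v * (if mass_below q D v + u * mass_at q D v <= w then 1 else 0)))).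
by apply: eq_bigr => v _; rewrite Rintegral_threshold ?mass_at_ge0.
Qed.

Lemma stieltjes_sum_min_le (R : realFieldType) (Y : finType) (q D : Y -> R)
    (w P : R) (n : nat) :
  (forall y, 0 <= q y) -> (forall y, 0 <= D y) -> \sum_y q y = 1 ->
  0 < w < 1 -> (1 - w) ^+ n <= P ->
  stieltjes_sum q D (fun a => (1 - a) ^+ n.+1)
  <= stieltjes_sum q D (ramp w) / w
     + (stieltjes_sum q D (ramp 1) - stieltjes_sum q D (ramp w) / w) * P.
Proof.
move=> q_ge0 D_ge0 q_sum1 w01 hP.
pose G a := (w^-1 - w^-1 * P) * ramp w a + P * ramp 1 a.
have G_eq a : G a = ramp w a / w + (ramp 1 a - ramp w a / w) * P by rewrite /G; ring.
have -> : stieltjes_sum q D (ramp w) / w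
     + (stieltjes_sum q D (ramp 1) - stieltjes_sum q D (ramp w) / w) * P
    = stieltjes_sum q D G by rewrite stieltjes_sum_lin; ring.
rewrite -subr_ge0.
have -> : stieltjes_sum q D G - stieltjes_sum q D (fun a => (1 - a) ^+ n.+1)
    = stieltjes_sum q D (fun a => 1 * G a + (-1) * (1 - a) ^+ n.+1).
  by rewrite (stieltjes_sum_lin q D 1 (-1) G (fun a => (1 - a) ^+ n.+1)) mul1r mulN1r.
apply: stieltjes_sum_ge0 => // [a a01|].
  by rewrite /= mul1r mulN1r subr_ge0 G_eq one_sub_exprS_le.
have w_le1 : w - 1 <= 0 by rewrite subr_le0; case/andP: w01 => _ /ltW.
by rewrite /= G_eq /ramp (max_l w_le1) subrr maxxx exprS; ring.
Qed.

Lemma Emin_stieltjes (R : realType) (X Y : finType) (PX : X -> R) (QY : Y -> R)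
    (d : X -> Y -> R) (n : nat) :
  \sum_y QY y = 1 ->
  Emin PX QY d n = \sum_x PX x * stieltjes_sum QY (d x) (fun a => (1 - a) ^+ n.+1).
Proof.
move=> QY_sum1; apply: eq_bigr => x _.
rewrite -expected_min_stieltjes // mulr_sumr.
by apply: eq_bigr => ys _; rewrite mulrA.
Qed.

Lemma Dtilde_stieltjes (R : realType) (X Y : finType) (PX : X -> R) (QY : Y -> R)
    (d : X -> Y -> R) (w : R) :
  (forall y, 0 <= QY y) ->
  Dtilde PX QY d w = w^-1 * \sum_x PX x * stieltjes_sum QY (d x) (ramp w).
Proof.
move=> QY_ge0; congr (_ * _); apply: eq_bigr => x _.
rewrite -sum_Rintegral_threshold // mulr_sumr.
(* [pc QY d x y u] unfolds to
   [mass_below QY (d x) (d x y) + u * mass_at QY (d x) (d x y)]. *)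
by apply: eq_bigr => y _; rewrite mulrA.
Qed.

Lemma Dtilde_ge0 (R : realType) (X Y : finType) (PX : X -> R) (QY : Y -> R)
    (d : X -> Y -> R) (w : R) :
  0 < w -> (forall x, 0 <= PX x) -> (forall y, 0 <= QY y) ->
  (forall x y, 0 <= d x y) -> 0 <= Dtilde PX QY d w.
Proof.
move=> w_gt0 PX_ge0 QY_ge0 d_ge0.
rewrite Dtilde_stieltjes // mulr_ge0 ?invr_ge0 ?(ltW w_gt0) //.
by rewrite sumr_ge0 // => x _; rewrite mulr_ge0 ?stieltjes_sum_ramp_ge0.
Qed.

Lemma Dtilde1_le (R : realType) (X Y : finType) (PX : X -> R) (QY : Y -> R)
    (d : X -> Y -> R) (dmax : R) :
  is_pmf PX -> is_pmf QY -> (forall x y, 0 <= d x y) ->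
  (forall x y, d x y <= dmax) -> Dtilde PX QY d 1 <= dmax.
Proof.
move=> [PX_ge0 PX_sum1] [QY_ge0 QY_sum1] d_ge0 d_le.
have -> : dmax = \sum_x PX x * dmax by rewrite -mulr_suml PX_sum1 mul1r.
rewrite Dtilde_stieltjes // invr1 mul1r; apply: ler_sum => x _.
by rewrite ler_wpM2l ?stieltjes_sum_ramp_le.
Qed.

Lemma Emin_le_Dtilde (R : realType) (X Y : finType) (PX : X -> R) (QY : Y -> R)
    (d : X -> Y -> R) (w P : R) (n : nat) :
  is_pmf PX -> is_pmf QY -> (forall x y, 0 <= d x y) ->
  0 < w < 1 -> (1 - w) ^+ n <= P ->
  Emin PX QY d n <= Dtilde PX QY d w + (Dtilde PX QY d 1 - Dtilde PX QY d w) * P.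
Proof.
move=> [PX_ge0 _] [QY_ge0 QY_sum1] d_ge0 w01 hP.
rewrite Emin_stieltjes // !Dtilde_stieltjes // invr1 mul1r.
rewrite !mulr_sumr -sumrB mulr_suml -big_split /=; apply: ler_sum => x _.
set Sw := stieltjes_sum _ _ (ramp w); set S1 := stieltjes_sum _ _ (ramp 1).
have -> : w^-1 * (PX x * Sw) + (PX x * S1 - w^-1 * (PX x * Sw)) * P
    = PX x * (Sw / w + (S1 - Sw / w) * P) by ring.
by rewrite ler_wpM2l // stieltjes_sum_min_le.
Qed.

Unset Implicit Arguments.
Theorem corollary1 (R : realType) (X Y : finType) (PX : X -> R) (QY : Y -> R)
  (d : X -> Y -> R) (dmax : R) (rate : R) (n : nat) (lambda : R) :
  is_pmf PX -> is_pmf QY ->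
  (forall x y, 0 <= d x y) -> (forall x y, d x y <= dmax) ->
  0 <= rate -> expR rate = n%:R ->
  lambda < rate ->
  let w := expR (- (rate - lambda)) in
  Emin PX QY d n <=
    Dtilde PX QY d w
    + (Dtilde PX QY d 1 - Dtilde PX QY d w) * expR (- expR lambda) * (expR lambda + 1)
  /\
  Dtilde PX QY d w
    + (Dtilde PX QY d 1 - Dtilde PX QY d w) * expR (- expR lambda) * (expR lambda + 1)
  <= Dtilde PX QY d w + dmax * expR (- expR lambda) * (expR lambda + 1).
Proof.
move=> PX_pmf QY_pmf d_ge0 d_le _ rate_n lambda_lt w.
have w_gt0 : 0 < w by exact: expR_gt0.
have w_lt1 : w < 1 by rewrite expR_lt1 oppr_lt0 subr_gt0.
have nw : n%:R * w = expR lambda by rewrite -rate_n -expRD; congr expR; ring.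
have P_ge0 : 0 <= expR (- expR lambda) * (expR lambda + 1).
  by rewrite mulr_ge0 ?addr_ge0 ?expR_ge0.
have hP : (1 - w) ^+ n <= expR (- expR lambda) * (expR lambda + 1).
  apply: le_trans (exprn_one_sub_le_expR n (ltW w_lt1)) _.
  by rewrite nw -[X in X <= _]mulr1 ler_wpM2l ?expR_ge0 // lerDr expR_ge0.
rewrite -!mulrA; split; first by apply: Emin_le_Dtilde; rewrite ?w_gt0 ?w_lt1.
case: (PX_pmf) (QY_pmf) => [PX_ge0 _] [QY_ge0 _].
rewrite lerD2l ler_wpM2r // lerBlDr (le_trans (Dtilde1_le PX_pmf QY_pmf d_ge0 d_le)) //.
by rewrite lerDl Dtilde_ge0.
Qed.
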